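(* Let $\Lambda$ be a finite set of multicompositions of $n$ with $\omega\in\Lambda$ and $\Lambda^+\subseteq\Lambda$. Then $$\mathscr S(\Lambda)\cong\operatorname{End}_{\mathscr H}\Big(\bigoplus_{\lambda\in\Lambda}M^\lambda\Big)\quad\text{and}\quad\mathscr H\cong\operatorname{End}_{\mathscr S(\Lambda)}\Big(\bigoplus_{\lambda\in\Lambda}M^\lambda\Big),$$ where $\bigoplus_{\lambda\in\Lambda}M^\lambda$ is regarded as an $(\mathscr S(\Lambda),\mathscr H)$-bimodule.
   Context: $R$ is an integral domain and $\mathscr H$ is the Ariki–Koike algebra over $R$ with parameters $q$ (invertible), $Q_1,\dots,Q_r$. For a multicomposition $\mu$, $M^\mu=m_\mu\mathscr H$, where $m_\mu=x_\mu u^+_\mu$, $x_\mu=\sum_{w\in\mathfrak S_\mu}T_w$ and $u^+_\mu=\prod_{s=2}^r\prod_{k=1}^{|\mu^{(1)}|+\dots+|\mu^{(s-1)}|}(L_k-Q_s)$, $L_k=q^{1-k}T_{k-1}\cdots T_1T_0T_1\cdots T_{k-1}$. The cyclotomic $q$-Schur algebra is $\mathscr S(\Lambda)=\operatorname{End}_{\mathscr H}(\bigoplus_{\mu\in\Lambda}M^\mu)$, acting on the left of $\bigoplus_\mu M^\mu$; $\Lambda^+$ is the set of multipartitions of $n$ dominating some element of $\Lambda$ in the dominance order; $\omega=((0),\dots,(0),(1^n))$, so $M^\omega=\mathscr H$. *)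

From HB Require Import structures.
From mathcomp Require Import all_boot all_order all_algebra all_fingroup.
Set Implicit Arguments. Unset Strict Implicit. Unset Printing Implicit Defensive.
Import GRing.Theory.
Local Open Scope ring_scope.

Definition ord_prev n (i : 'I_n) : 'I_n :=
  Ordinal (leq_ltn_trans (leq_pred i) (ltn_ord i)).

(* s_i = transposition of the points i and i+1 (1-based), i.e. of the
   0-based points i-1 and i; for 1 <= i <= n-1. *)
Definition sgen n (i : 'I_n) : 'S_n := tperm (ord_prev i) i.

Definition is_word n (w : 'S_n) k (t : k.-tuple 'I_n) : bool :=
  all (fun j : 'I_n => (j : nat) != 0%N) t && ((\prod_(j <- t) sgen j)%g == w).

(* length of w = minimal length of an expression of w in the s_i
   (every w in S_n has an expression of length <= n*n) *)
Definition perm_len n (w : 'S_n) : nat :=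
  find (fun k => [exists t : k.-tuple 'I_n, is_word w t]) (iota 0 (n * n).+1).

Definition Tw (R : idomainType) (A : algType R) n (T : nat -> A) (w : 'S_n) : A :=
  match [pick t : (perm_len w).-tuple 'I_n | is_word w t] with
  | Some t => \prod_(j <- t) T (j : nat)
  | None => 0
  end.

(* Defining relations of the Ariki--Koike algebra on elements t 0, ..., t (n-1)
   (t 0 = T_0, t i = T_i). Parameters q, Q_1..Q_r (Q indexed from 1). *)
Definition AK_rels (R : idomainType) (q : R) (Q : nat -> R) (r n : nat)
    (B : algType R) (t : nat -> B) : Prop :=
  [/\ (0 < n)%N -> \prod_(1 <= s < r.+1) (t 0%N - (Q s)%:A) = 0,
      (forall i, (1 <= i < n)%N -> (t i - q%:A) * (t i + 1) = 0),
      (1 < n)%N -> t 0%N * t 1%N * t 0%N * t 1%N = t 1%N * t 0%N * t 1%N * t 0%N,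
      (forall i, (1 <= i)%N -> (i.+2 <= n)%N ->
           t i * t i.+1 * t i = t i.+1 * t i * t i.+1)
    & (forall i j, (i < n)%N -> (j < n)%N -> (i.+1 < j)%N -> t i * t j = t j * t i)].

Definition alg_hom (R : idomainType) (A B : algType R) (f : A -> B) : Prop :=
  [/\ forall (a : R) (u v : A), f (a *: u + v) = a *: f u + f v,
      forall u v : A, f (u * v) = f u * f v
    & f 1 = 1].

(* (A, T) is the Ariki--Koike algebra H_{R,n}(q, Q_1..Q_r): the R-algebra
   presented by generators T_0..T_{n-1} and the relations above, i.e. the
   universal R-algebra with such elements. *)
Definition is_AK_algebra (R : idomainType) (q : R) (Q : nat -> R) (r n : nat)
    (A : algType R) (T : nat -> A) : Prop :=
  AK_rels q Q r n T /\
  forall (B : algType R) (t : nat -> B), AK_rels q Q r n t ->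
    (exists f : A -> B, alg_hom f /\ forall i, (i < n)%N -> f (T i) = t i) /\
    (forall f g : A -> B, alg_hom f -> alg_hom g ->
        (forall i, (i < n)%N -> f (T i) = t i) ->
        (forall i, (i < n)%N -> g (T i) = t i) -> forall x, f x = g x).

Definition multicomp (r n : nat) (mu : seq (seq nat)) : bool :=
  (size mu == r) && (sumn (map sumn mu) == n).

Definition multipart (r n : nat) (la : seq (seq nat)) : bool :=
  multicomp r n la &&
  all (fun p => sorted geq p && (0%N \notin p)) la.

(* dominance: la dominates mu iff for all s, k,
   |la^(1)|+..+|la^(s-1)| + la^(s)_1+..+la^(s)_k >= same for mu *)
Definition dsum (mu : seq (seq nat)) (s k : nat) : nat :=
  (sumn (map sumn (take s mu)) + sumn (take k (nth [::] mu s)))%N.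

Definition dominates (la mu : seq (seq nat)) : Prop :=
  forall s k, (dsum mu s k <= dsum la s k)%N.

Definition omega (r n : nat) : seq (seq nat) :=
  rcons (nseq r.-1 [::]) (nseq n 1%N).

Definition Lk (R : idomainType) (q : R) (A : algType R) (T : nat -> A) (k : nat) : A :=
  (q^-1 ^+ k.-1) *:
    ((\prod_(j <- rev (iota 0 k)) T j) * (\prod_(j <- iota 1 k.-1) T j)).

Definition psums (s : seq nat) : seq nat :=
  [seq sumn (take j.+1 s) | j <- iota 0 (size s)].

(* index of the block containing the (0-based) point p, for the blocks of
   consecutive integers given by the concatenation of the components of mu *)
Definition block (mu : seq (seq nat)) (p : nat) : nat :=
  count (fun b => b <= p)%N (psums (flatten mu)).

(* x_mu = sum_{w in S_mu} T_w, S_mu the Young subgroup *)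
Definition x_mu (R : idomainType) (A : algType R) n (T : nat -> A)
    (mu : seq (seq nat)) : A :=
  \sum_(w : 'S_n | [forall p : 'I_n, block mu (w p) == block mu p]) Tw T w.

Definition u_plus (R : idomainType) (q : R) (Q : nat -> R) (r : nat)
    (A : algType R) (T : nat -> A) (mu : seq (seq nat)) : A :=
  \prod_(2 <= s < r.+1)
     \prod_(1 <= k < (sumn (map sumn (take s.-1 mu))).+1) (Lk q T k - (Q s)%:A).

Definition m_mu (R : idomainType) (q : R) (Q : nat -> R) (r n : nat)
    (A : algType R) (T : nat -> A) (mu : seq (seq nat)) : A :=
  x_mu n T mu * u_plus q Q r T mu.

(* Elements of (+)_{mu in Lambda} M^mu are represented as functions from
   multicompositions to A, supported on Lambda, with mu-component in
   M^mu = m_mu H. *)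
Definition inM (R : idomainType) (q : R) (Q : nat -> R) (r n : nat)
    (A : algType R) (T : nat -> A) (Lam : seq (seq (seq nat)))
    (x : seq (seq nat) -> A) : Prop :=
  forall mu, (mu \in Lam -> exists h : A, x mu = m_mu q Q r n T mu * h) /\
             (mu \notin Lam -> x mu = 0).

Definition addM (A : Type) (add : A -> A -> A) (x y : seq (seq nat) -> A) :=
  fun mu => add (x mu) (y mu).

Definition ractM (R : idomainType) (A : algType R) (x : seq (seq nat) -> A) (h : A) :
  seq (seq nat) -> A := fun mu => x mu * h.

(* phi is an endomorphism of the right H-module M: an element of
   S(Lambda) = End_H((+)_{mu in Lambda} M^mu) (acting on the left). *)
Definition in_Schur (R : idomainType) (q : R) (Q : nat -> R) (r n : nat)
    (A : algType R) (T : nat -> A) (Lam : seq (seq (seq nat)))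
    (phi : (seq (seq nat) -> A) -> (seq (seq nat) -> A)) : Prop :=
  let M := inM q Q r n T Lam in
  [/\ forall x, M x -> M (phi x),
      forall x y, M x -> M y -> phi (addM +%R x y) = addM +%R (phi x) (phi y)
    & forall x h, M x -> phi (ractM x h) = ractM (phi x) h].

Definition in_End_Schur (R : idomainType) (q : R) (Q : nat -> R) (r n : nat)
    (A : algType R) (T : nat -> A) (Lam : seq (seq (seq nat)))
    (psi : (seq (seq nat) -> A) -> (seq (seq nat) -> A)) : Prop :=
  let M := inM q Q r n T Lam in
  [/\ forall x, M x -> M (psi x),
      forall x y, M x -> M y -> psi (addM +%R x y) = addM +%R (psi x) (psi y)
    & forall phi, in_Schur q Q r n T Lam phi ->
        forall x, M x -> psi (phi x) = phi (psi x)].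

From HB Require Import structures.
From mathcomp Require Import all_boot all_order all_algebra all_fingroup.
From mathcomp Require Import zify.
From Stdlib Require Import FunctionalExtensionality.
Import GRing.Theory.
Local Open Scope ring_scope.

(* The Young subgroup of omega = ((0),...,(0),(1^n)) is trivial and u^+_omega
   is an empty product, so m_omega = 1 and M^omega = H.  Hence the element e
   of M that is 1 in the omega-component and 0 elsewhere generates M as a
   right H-module: x = (y |-> x . y_omega) e, and y |-> x . y_omega lies in
   S(Lambda).  An S(Lambda)-endomorphism psi therefore satisfies
   psi x = x . (psi e)_omega, i.e. it is right multiplication by an element of
   H, and that element is recovered from its action on e.  The first
   isomorphism is the definition of S(Lambda). *)

Lemma count_leq_iota (p a m : nat) :
  count (fun b => b <= p)%N (iota a m) = minn (p.+1 - a) m.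
Proof.
elim: m a => [|m IHm] a /=; first by rewrite minn0.
by rewrite IHm; case: (leqP a p) => /= ?; lia.
Qed.

Lemma block_omega (r n p : nat) : (p < n)%N -> block (omega r n) p = p.
Proof.
move=> ltpn; rewrite /block /omega flatten_rcons.
have -> : flatten (nseq r.-1 ([::] : seq nat)) = [::] by elim: r.-1.
rewrite /= /psums size_nseq.
have -> : [seq sumn (take j.+1 (nseq n 1%N)) | j <- iota 0 n] = iota 1 n.
  rewrite (_ : iota 1 n = map S (iota 0 n)); last by rewrite -(iotaDl 1).
  apply/eq_in_map => j.
  by rewrite mem_iota => /andP[_ ltjn]; rewrite take_nseq // sumn_nseq mul1n.
by rewrite count_leq_iota; lia.
Qed.

Lemma perm_len1 (n : nat) : perm_len (1 : 'S_n) = 0%N.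
Proof.
rewrite /perm_len /= ifT //; apply/existsP; exists [tuple].
by rewrite /is_word big_nil eqxx.
Qed.

Lemma Tw1 (R : idomainType) (A : algType R) (n : nat) (T : nat -> A) :
  Tw T (1 : 'S_n) = 1.
Proof.
rewrite /Tw; move: (perm_len1 n); case: pickP => [t _ | no_word] len0.
  by move: t; rewrite len0 => t; rewrite tuple0 big_nil.
move: no_word; rewrite len0 => /(_ [tuple]).
by rewrite /is_word big_nil eqxx.
Qed.

Lemma x_mu_omega (R : idomainType) (A : algType R) (r n : nat) (T : nat -> A) :
  x_mu n T (omega r n) = 1.
Proof.
rewrite /x_mu (eq_bigl (pred1 1%g)) ?big_pred1_eq ?Tw1 // => w /=.
apply/forallP/eqP => [fix_blocks | ->]; last by move=> p; rewrite perm1.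
apply/permP => p; apply/val_inj; rewrite perm1 /=.
by move/eqP: (fix_blocks p); rewrite !block_omega.
Qed.

Lemma u_plus_omega (R : idomainType) (q : R) (Q : nat -> R) (r n : nat)
    (A : algType R) (T : nat -> A) :
  u_plus q Q r T (omega r n) = 1.
Proof.
rewrite /u_plus big_nat; apply: big1 => s /andP[le2s ltsr].
rewrite /omega -cats1 takel_cat ?size_nseq; last by lia.
rewrite take_nseq; last by lia.
have -> : sumn (map sumn (nseq s.-1 ([::] : seq nat))) = 0%N by elim: s.-1.
by rewrite big_geq.
Qed.

Lemma m_mu_omega (R : idomainType) (q : R) (Q : nat -> R) (r n : nat)
    (A : algType R) (T : nat -> A) :
  m_mu q Q r n T (omega r n) = 1.
Proof. by rewrite /m_mu x_mu_omega u_plus_omega mulr1. Qed.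

Section DoubleCentralizer.

Variables (R : idomainType) (q : R) (Q : nat -> R) (r n : nat).
Variables (A : algType R) (T : nat -> A) (Lam : seq (seq (seq nat))).
Variable om : seq (seq nat).
Hypothesis om_in_Lam : om \in Lam.
Hypothesis m_om : m_mu q Q r n T om = 1.

Local Notation M := (inM q Q r n T Lam).

Definition unitM : seq (seq nat) -> A := fun mu => if mu == om then 1 else 0.

Definition lmulM (x y : seq (seq nat) -> A) : seq (seq nat) -> A :=
  fun mu => x mu * y om.

Lemma inM_unit : M unitM.
Proof.
move=> mu; rewrite /unitM; case: eqP => [-> | _]; split=> //.
- by exists 1; rewrite m_om mulr1.
- by rewrite om_in_Lam.
- by exists 0; rewrite mulr0.
Qed.

Lemma lmulM_unit x : lmulM x unitM = x.
Proof. by apply: functional_extensionality => mu; rewrite /lmulM /unitM eqxx mulr1. Qed.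

Lemma inM_ract x h : M x -> M (ractM x h).
Proof.
move=> xM mu; have [x_in x_out] := xM mu; split.
  by move=> /x_in [h0 x_eq]; exists (h0 * h); rewrite /ractM x_eq mulrA.
by move=> /x_out x0; rewrite /ractM x0 mul0r.
Qed.

Lemma in_Schur_lmulM x : M x -> in_Schur q Q r n T Lam (lmulM x).
Proof.
move=> xM; split.
- by move=> y _; apply: inM_ract.
- by move=> y z _ _; apply: functional_extensionality => mu; rewrite /lmulM /addM mulrDr.
- by move=> y h _; apply: functional_extensionality => mu; rewrite /lmulM /ractM mulrA.
Qed.

Lemma ractM_in_End_Schur h : in_End_Schur q Q r n T Lam (fun x => ractM x h).
Proof.
split.
- by move=> x; apply: inM_ract.
- by move=> x y _ _; apply: functional_extensionality => mu; rewrite /ractM /addM mulrDl.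
- by move=> phi [_ _ phi_ract] x xM; rewrite phi_ract.
Qed.

Lemma ractM_inj h h' :
  (forall x, M x -> ractM x h = ractM x h') -> h = h'.
Proof.
move=> /(_ unitM inM_unit)/(congr1 (fun x => x om)).
by rewrite /ractM /unitM eqxx !mul1r.
Qed.

Lemma in_End_Schur_ractM psi :
  in_End_Schur q Q r n T Lam psi -> forall x, M x -> psi x = ractM x (psi unitM om).
Proof.
move=> [_ _ psi_comm] x xM.
rewrite -{1}(lmulM_unit x) psi_comm //; [exact: in_Schur_lmulM | exact: inM_unit].
Qed.

End DoubleCentralizer.

Theorem mainTheorem12 (R : idomainType) (q : R) (Q : nat -> R) (r n : nat)
    (A : algType R) (T : nat -> A)
    (hr : (0 < r)%N) (hq : q \is a GRing.unit)
    (hAK : is_AK_algebra q Q r n T)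
    (Lam : seq (seq (seq nat)))
    (hLam : all (multicomp r n) Lam)
    (homega : omega r n \in Lam)
    (hplus : forall la, multipart r n la ->
               (exists2 mu, mu \in Lam & dominates la mu) -> la \in Lam) :
  [/\ forall h : A, in_End_Schur q Q r n T Lam (fun x => ractM x h),
      forall h h' : A,
        (forall x, inM q Q r n T Lam x -> ractM x h = ractM x h') -> h = h'
    & forall psi, in_End_Schur q Q r n T Lam psi ->
        exists h : A, forall x, inM q Q r n T Lam x -> psi x = ractM x h].
Proof.
have m_om := m_mu_omega R q Q r n A T.
split.
- exact: ractM_in_End_Schur.
- exact: ractM_inj homega m_om.
- move=> psi psiE; eexists.
  exact: in_End_Schur_ractM homega m_om psi psiE.
Qed.
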